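(* Let $X$ be a compact metric space and $f\colon X\to X$ a positively $n$-expansive homeomorphism which has the shadowing property and admits only finitely many chain recurrent classes. Then $X$ is finite.
   Context: $f$ is positively $n$-expansive if there exists $c>0$ such that for every $x\in X$ the set $W^s_c(x)=\{y: d(f^k(y),f^k(x))\leq c \ \forall k\geq0\}$ has at most $n$ points. $f$ has the shadowing property if for every $\varepsilon>0$ there is $\delta>0$ such that for every $(x_k)_{k\in\mathbb{Z}}$ with $d(f(x_k),x_{k+1})<\delta$ for all $k$ there is $y$ with $d(f^k(y),x_k)<\varepsilon$ for all $k$. A point $x$ is chain recurrent if for each $\varepsilon>0$ there is a nontrivial finite $\varepsilon$-pseudo orbit (a sequence $x_0,\dots,x_l$ with $d(f(x_k),x_{k+1})<\varepsilon$) starting and ending at $x$. The chain recurrent class of a chain recurrent point $x$ is the set of $y$ such that for every $\varepsilon>0$ there is a periodic $\varepsilon$-pseudo orbit containing both $x$ and $y$; the chain recurrent set is partitioned into these classes. *)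

(* A compact metric space is a [metricType R]
   (R : realType) whose full set is [compact]; distance = [mdist]. *)
From HB Require Import structures.
From mathcomp Require Import all_boot all_order all_algebra.
From mathcomp Require Import all_classical all_reals all_analysis.
Set Implicit Arguments. Unset Strict Implicit. Unset Printing Implicit Defensive.
Import Order.TTheory GRing.Theory Num.Theory.
Local Open Scope classical_set_scope.
Local Open Scope ring_scope.

Section Dyn.
Context {R : realType} {X : metricType R}.
Notation d := (@mdist R X).

Definition stable_set (f : X -> X) (c : R) (x : X) : set X :=
  [set y | forall k : nat, d (iter k f y) (iter k f x) <= c].

Definition pos_n_expansive (f : X -> X) (n : nat) : Prop :=
  exists2 c : R, 0 < c &
    forall x : X, exists s : seq X, (size s <= n)%N /\ stable_set f c x `<=` [set` s].

(* shadowing: every (bi-infinite) delta-pseudo orbit is eps-shadowed by the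
   orbit (f^k y)_{k in Z} of some y; the full orbit is encoded as a sequence
   ys : int -> X with ys 0 = y and ys (k+1) = f (ys k) for all integers k. *)
Definition shadowing (f : X -> X) : Prop :=
  forall eps : R, 0 < eps -> exists2 delta : R, 0 < delta &
    forall xs : int -> X, (forall k : int, d (f (xs k)) (xs (k + 1)) < delta) ->
      exists ys : int -> X, (forall k : int, ys (k + 1) = f (ys k)) /\
        (forall k : int, d (ys k) (xs k) < eps).

Definition pseudo_chain (f : X -> X) (eps : R) (x y : X) : Prop :=
  exists l : nat, exists u : nat -> X, (0 < l)%N /\ u 0%N = x /\ u l = y /\
    forall k : nat, (k < l)%N -> d (f (u k)) (u k.+1) < eps.

Definition chain_recurrent (f : X -> X) (x : X) : Prop :=
  forall eps : R, 0 < eps -> pseudo_chain f eps x x.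

Definition periodic_pseudo_orbit_through (f : X -> X) (eps : R) (x y : X) : Prop :=
  exists u : nat -> X, exists p : nat, (0 < p)%N /\
    (forall k : nat, u (k + p)%N = u k) /\
    (forall k : nat, d (f (u k)) (u k.+1) < eps) /\
    (exists i : nat, u i = x) /\ (exists j : nat, u j = y).

Definition chain_class (f : X -> X) (x : X) : set X :=
  [set y | forall eps : R, 0 < eps -> periodic_pseudo_orbit_through f eps x y].

Definition chain_classes (f : X -> X) : set (set X) :=
  [set C | exists2 x, chain_recurrent f x & C = chain_class f x].

End Dyn.

From HB Require Import structures.
From mathcomp Require Import all_boot all_order all_algebra.
From mathcomp Require Import all_classical all_reals all_analysis.
From mathcomp Require Import zify lra.
Import Order.TTheory GRing.Theory Num.Theory.
Local Open Scope classical_set_scope.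
Local Open Scope ring_scope.

(* Fix an expansivity constant c and a shadowing constant delta for
   tolerance c/2.  The chain recurrent set CR is finite: the chain class of a
   point a lies in the set of points y with a -> y -> a by arbitrarily fine
   chains, and this set is finite.  Otherwise compactness yields n+1 distinct,
   delta/4-close points of it, reached from a by delta-chains of a common
   length.  They cannot all stay c-close forever (they would lie in one stable
   set), so two of them, pushed forward k times, give points x, y more than c
   apart, and delta-loops X, Y at a of a common length through x and y at the
   same time.  The n+1 loops X^i Y^(n-i) are shadowed by points following the
   orbit of a, hence lying in one stable set; two of these shadows coincide,
   yet one of them would have to follow both x and y.
   Next, every forward orbit accumulates only on CR; being finite and
   invariant, CR consists of periodic orbits, and the orbit of x eventually
   c/2-shadows one of them, of period p.  Then x, f^p x, f^2p x, ... lie in one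
   stable set, so x is periodic, hence chain recurrent, and X = CR. *)

Section PseudoOrbits.
Context {R : realType} {X : metricType R}.
Local Notation d := (@mdist R X).
Variable f : X -> X.

Definition pseudo_orbit (e : R) (u : nat -> X) (l : nat) :=
  forall k, (k < l)%N -> d (f (u k)) (u k.+1) < e.

Definition pchain (e : R) (x y : X) (l : nat) :=
  exists u, [/\ u 0%N = x, u l = y & pseudo_orbit e u l].

Definition chain_reach (x y : X) := forall e, 0 < e -> pseudo_chain f e x y.

Definition chain_related (a : X) : set X :=
  [set y | chain_reach a y /\ chain_reach y a].

Definition splice (u : nat -> X) (l : nat) (v : nat -> X) (k : nat) :=
  if (k <= l)%N then u k else v (k - l)%N.

Lemma spliceL u l v k : (k <= l)%N -> splice u l v k = u k.
Proof. by rewrite /splice => ->. Qed.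

Lemma spliceR u l v k : u l = v 0%N -> splice u l v (l + k) = v k.
Proof.
rewrite /splice => ulv0; case: k => [|k]; first by rewrite addn0 leqnn.
have -> : (l + k.+1 <= l)%N = false by lia.
by rewrite addKn.
Qed.

Lemma pseudo_orbit_splice e u v l1 l2 :
  pseudo_orbit e u l1 -> pseudo_orbit e v l2 -> u l1 = v 0%N ->
  pseudo_orbit e (splice u l1 v) (l1 + l2).
Proof.
move=> hu hv uv k kl; have [kl1|l1k] := ltnP k l1.
  by rewrite !spliceL //; [exact: hu | exact: ltnW].
rewrite -(subnKC l1k) -addnS !spliceR //; apply: hv; lia.
Qed.

Lemma pchain_cat_at {e x y z l1 l2} : pchain e x y l1 -> pchain e y z l2 ->
  exists u, [/\ u 0%N = x, u l1 = y, u (l1 + l2)%N = z & pseudo_orbit e u (l1 + l2)].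
Proof.
move=> [u [u0 ul hu]] [v [v0 vl hv]]; have uv : u l1 = v 0%N by rewrite ul v0.
exists (splice u l1 v); split; [by rewrite spliceL | by rewrite spliceL | by rewrite spliceR |].
exact: pseudo_orbit_splice.
Qed.

Lemma pchain_cat e x y z l1 l2 :
  pchain e x y l1 -> pchain e y z l2 -> pchain e x z (l1 + l2).
Proof.
by move=> xy yz; have [u [u0 _ uz u_po]] := pchain_cat_at xy yz; exists u.
Qed.

Lemma pchain1 e x y : d (f x) y < e -> pchain e x y 1.
Proof. by move=> xy; exists (fun k => if k is 0%N then x else y); split => // -[]. Qed.

Lemma pchain_orbit e x k : 0 < e -> pchain e x (iter k f x) k.
Proof. by move=> e0; exists (fun i => iter i f x); split => // i _; rewrite mdistxx. Qed.

Lemma pchain_le e e' x y l : e <= e' -> pchain e x y l -> pchain e' x y l.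
Proof.
move=> ee' [u [u0 ul hu]]; exists u; split => // k kl.
exact: lt_le_trans (hu k kl) ee'.
Qed.

Lemma pchain_move_end e e' x p q l : (0 < l)%N ->
  pchain e x p l -> d p q < e' -> pchain (e + e') x q l.
Proof.
move=> l0 [u [u0 ul hu]] pq; exists (fun k => if k == l then q else u k).
rewrite eqxx (ltn_eqF l0); split => // k kl; rewrite (ltn_eqF kl).
have [kl1|_] := eqVneq k.+1 l.
  by have := hu k kl; have := metric_triangle (f (u k)) p q; rewrite kl1 ul; lra.
by have := hu k kl; have := @mdist_ge0 R X p q; lra.
Qed.

Lemma pseudo_chainP e x y :
  pseudo_chain f e x y <-> exists2 l, (0 < l)%N & pchain e x y l.
Proof.
split; first by move=> [l [u [l0 [u0 [ul hu]]]]]; exists l => //; exists u.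
by move=> [l l0 [u [u0 ul hu]]]; exists l, u.
Qed.

Lemma periodic_chain_recurrent x p : (0 < p)%N -> iter p f x = x -> chain_recurrent f x.
Proof.
move=> p0 xp e e0; apply/pseudo_chainP; exists p => //.
by rewrite -{2}xp; exact: pchain_orbit.
Qed.

Lemma pchain_periodic e (u : nat -> X) p i j : (0 < p)%N ->
  (forall k, u (k + p)%N = u k) -> (forall k, d (f (u k)) (u k.+1) < e) ->
  exists2 l, (0 < l)%N & pchain e (u i) (u j) l.
Proof.
move=> p0 up hu; have upm m k : u (k + m * p)%N = u k.
  by elim: m k => [|m IH] k; rewrite ?addn0 // mulSn (addnC p) addnA up IH.
exists (j + i.+1 * p - i)%N; first by have := leq_pmull i.+1 p0; lia.
exists (fun k => u (i + k)%N); split => //; first by rewrite addn0.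
- by rewrite subnKC ?upm //; have := leq_pmull i.+1 p0; lia.
- by move=> k _; rewrite addnS.
Qed.

Lemma chain_class_related a : chain_class f a `<=` chain_related a.
Proof.
move=> y ay; split => e e0; have [u [p [p0 [up [hu [[i <-] [j <-]]]]]]] := ay e e0;
  apply/pseudo_chainP; exact: pchain_periodic up hu.
Qed.

Lemma chain_class_refl x : chain_recurrent f x -> chain_class f x x.
Proof.
move=> hx e e0; have /pseudo_chainP[l l0 [u [u0 ul hu]]] := hx e e0.
exists (fun k => u (k %% l)%N), l; split => //; split; first by move=> k; rewrite modnDr.
split; last by split; exists 0%N; rewrite mod0n.
move=> k; rewrite modnS; case: ifP => [lk|_]; last exact/hu/ltn_pmod.
have kl := ltn_pmod k l0.
have kl1 : (k %% l).+1 = l.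
  apply/eqP; rewrite eqn_leq kl leqNgt; apply/negP => /modn_small kl1.
  by move: lk; rewrite /dvdn -addn1 -modnDml addn1 kl1.
by have := hu _ kl; rewrite kl1 ul -u0.
Qed.

End PseudoOrbits.

Arguments pseudo_orbit_splice {R X f e u v l1 l2}.
Arguments pchain_cat_at {R X f e x y z l1 l2}.
Arguments pchain_cat {R X f e x y z l1 l2}.
Arguments pchain_le {R X f e e' x y l}.
Arguments pchain_move_end {R X f e e' x p q l}.

Section RepeatLoop.
Context {R : realType} {X : metricType R}.
Variables (f : X -> X) (a : X) (L : nat -> X) (P : nat).
Hypotheses (L0 : L 0%N = a) (LP : L P = a).

Fixpoint repeat_loop (m : nat) : nat -> X :=
  if m is m'.+1 then splice L P (repeat_loop m') else fun=> a.

Lemma repeat_loop0 m : repeat_loop m 0%N = a.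
Proof. by case: m => [|m] //=; rewrite spliceL. Qed.

Lemma repeat_loop_end m : repeat_loop m (m * P) = a.
Proof. by elim: m => [|m IH] //=; rewrite mulSn spliceR // LP repeat_loop0. Qed.

Lemma repeat_loop_head m r : (0 < m)%N -> (r <= P)%N -> repeat_loop m r = L r.
Proof. by case: m => //= m _ rP; rewrite spliceL. Qed.

Lemma repeat_loopE m j r : (j < m)%N -> (r <= P)%N -> repeat_loop m (j * P + r) = L r.
Proof.
elim: m j => [|m IH] [|j] //= jm rP; first by rewrite mul0n spliceL.
by rewrite mulSn -addnA spliceR ?LP ?repeat_loop0 // IH.
Qed.

Lemma pseudo_orbit_repeat e m :
  pseudo_orbit f e L P -> pseudo_orbit f e (repeat_loop m) (m * P).
Proof.
move=> L_po; elim: m => [|m IH] /=; first by move=> k; rewrite mul0n.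
by rewrite mulSn; apply: pseudo_orbit_splice => //; rewrite LP repeat_loop0.
Qed.

End RepeatLoop.

Lemma iterK {T : Type} {f g : T -> T} k : cancel f g -> cancel (iter k f) (iter k g).
Proof. by move=> fK; elim: k => [|k IH] x //; rewrite iterSr iterS fK IH. Qed.

Lemma iter_collision_periodic {T : Type} {f g : T -> T} {x : T} {i j : nat} :
  cancel f g -> (i < j)%N -> iter i f x = iter j f x -> iter (j - i) f x = x.
Proof.
by move=> fK ij xij; apply: (can_inj (iterK i fK)); rewrite -iterD subnKC ?xij // ltnW.
Qed.

Lemma pigeonhole_seq (T : eqType) (h : nat -> T) (N : nat) (s : seq T) :
  (forall i, (i <= N)%N -> h i \in s) -> (size s <= N)%N ->
  exists i j, [/\ (i < j)%N, (j <= N)%N & h i = h j].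
Proof.
move=> hs sN; have /(uniqPn (h 0%N))[i [j [ij]]] : ~~ uniq (map h (iota 0 N.+1)).
  apply/negP => /uniq_leq_size le.
  have : (size (map h (iota 0 N.+1)) <= size s)%N.
    by apply: le => y /mapP[i]; rewrite mem_iota => /andP[_ iN] ->; apply: hs.
  by rewrite size_map size_iota ltnNge sN.
rewrite size_map size_iota => jN; rewrite !(nth_map 0%N) ?size_iota ?(ltn_trans ij) //.
by rewrite !nth_iota ?(ltn_trans ij) // => hij; exists i, j.
Qed.

Lemma finite_invariant_eventually_periodic {T : eqType} {f : T -> T} {s : seq T} {q : T} :
  (forall q, q \in s -> f q \in s) -> q \in s ->
  exists i p, (0 < p)%N /\ iter p f (iter i f q) = iter i f q.
Proof.
move=> s_inv qs.
have [|i [j [ij _ qij]]] := @pigeonhole_seq _ (fun k => iter k f q) (size s) s _ (leqnn _).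
  by move=> k _; elim: k => [|k IH] //=; exact: s_inv.
by exists i, (j - i)%N; rewrite subn_gt0 -iterD subnK ?ij // ltnW.
Qed.

Lemma uniform_radius (R : realDomainType) (T : eqType) (s : seq T) (P : T -> R -> Prop) :
  (forall q r r', 0 < r' <= r -> P q r -> P q r') ->
  (forall q, q \in s -> exists2 r, 0 < r & P q r) ->
  exists2 r, 0 < r & forall q, q \in s -> P q r.
Proof.
move=> Pdown; elim: s => [|q s IH] hs; first by exists 1.
have [r1 r10 Pr1] := hs q (mem_head _ _).
have [r2 r20 Pr2] : exists2 r, 0 < r & forall q', q' \in s -> P q' r.
  by apply: IH => q' q's; apply: hs; rewrite in_cons q's orbT.
have r0 : 0 < Order.min r1 r2 by rewrite lt_min r10 r20.
exists (Order.min r1 r2) => // q' /predU1P[->|q's].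
  by apply: (Pdown _ r1) Pr1; rewrite r0 ge_min lexx.
by apply: (Pdown _ r2 _ _ (Pr2 _ q's)); rewrite r0 ge_min lexx orbT.
Qed.

Lemma seq_separated {R : realType} {X : metricType R} (s : seq X) :
  exists2 D, 0 < D & forall q, q \in s -> forall q', q' \in s -> q != q' -> D <= mdist q q'.
Proof.
apply: (@uniform_radius _ _ s (fun q D => forall q', q' \in s -> q != q' -> D <= mdist q q')).
  by move=> q r r' /andP[_ r'r] h q' q's nq; exact: le_trans r'r (h q' q's nq).
move=> q _; apply: (@uniform_radius _ _ s (fun q' D => q != q' -> D <= mdist q q')).
  by move=> q' r r' /andP[_ r'r] h nq; exact: le_trans r'r (h nq).
move=> q' _; have [->|nq] := eqVneq q q'; first by exists 1; rewrite ?eqxx.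
by exists (mdist q q'); rewrite ?mdist_gt0.
Qed.

Lemma continuous_mdist {R : realType} {X : metricType R} {f : X -> X} :
  continuous f -> forall x (e : R), 0 < e ->
  exists2 r : R, 0 < r & forall z, mdist x z < r -> mdist (f x) (f z) < e.
Proof.
move=> fc x e e0; have /nbhs_ballP[r r0 hr] := fc x _ (nbhsx_ballx (f x) e e0).
by exists r => // z; move: (hr z); rewrite !ballEmdist.
Qed.

Lemma compact_cluster_base {R : realType} {X : metricType R} (I : Type) (B : I -> set X)
    (i0 : I) :
  compact [set: X] -> (forall i j, exists k, B k `<=` B i `&` B j) -> (forall i, B i !=set0) ->
  exists y, forall i r, 0 < r -> exists2 z, B i z & mdist y z < r.
Proof.
move=> cX BI Bn0.
have FF : Filter (filter_from setT B) := filter_fromT_filter (ex_intro _ i0 Logic.I) BI.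
have PF : ProperFilter (filter_from setT B) by apply: filter_from_proper => i _; exact: Bn0.
have [y [_ cly]] := cX _ PF filterT.
exists y => i r r0; have [|z [Biz yz]] := cly (B i) (ball y r) _ (nbhsx_ballx y r r0).
  by exists i.
by exists z => //; move: yz; rewrite ballEmdist.
Qed.

Lemma infinite_clustered {R : realType} {X : metricType R} {A : set X} :
  compact [set: X] -> infinite_set A -> forall k r, 0 < r ->
  exists y (s : seq X), [/\ size s = k, uniq s & forall z, z \in s -> A z /\ mdist y z < r].
Proof.
move=> cX A_inf k r r0.
have [||y ycl] := @compact_cluster_base _ _ _ (fun s => [set z | A z /\ z \notin s]) [::] cX.
- by move=> s s'; exists (s ++ s') => z [Az]; rewrite mem_cat negb_or => /andP[].
- move=> s; apply: contrapT => /forallNP notAs; apply: A_inf.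
  apply: (sub_finite_set _ (finite_seq s)) => z Az /=; apply: contrapT => /negP zs.
  exact: notAs z (conj Az zs).
exists y; elim: k => [|k [s [sk us near_s]]]; first by exists [::].
have [z [Az zs] yz] := ycl s r r0.
exists (z :: s); rewrite /= sk zs us; split => // z' /predU1P[-> //|]; exact: near_s.
Qed.

Section ChainContinuous.
Context {R : realType} {X : metricType R}.
Local Notation d := (@mdist R X).
Variable f : X -> X.
Hypothesis fc : continuous f.

Lemma pchain_behead e x : 0 < e ->
  exists2 e', 0 < e' & forall y l, pchain f e' x y l.+2 -> pchain f e (f x) y l.+1.
Proof.
move=> e0; have e20 : 0 < e / 2 by rewrite divr_gt0.
have [r r0 hr] := continuous_mdist fc (f x) _ e20.
exists (Order.min r (e / 2)) => [|y l [u [u0 ul hu]]]; first by rewrite lt_min r0 e20.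
exists (fun k => if k is 0%N then f x else u k.+1); split => // -[_|k kl].
  have := hu 0%N isT; rewrite u0 lt_min => /andP[/hr fxu1 _].
  have := hu 1%N isT; rewrite lt_min => /andP[_ fu1u2].
  by have := metric_triangle (f (f x)) (f (u 1%N)) (u 2%N); lra.
by have := hu k.+2 kl; rewrite lt_min => /andP[_]; lra.
Qed.

(* The loop at [a] makes the chain from [x] long enough to lose its first step. *)
Lemma chain_reach_f {a x} :
  chain_recurrent f a -> chain_reach f x a -> chain_reach f (f x) a.
Proof.
move=> ha hx e e0; have [e' e'0 he'] := pchain_behead e x e0.
have /pseudo_chainP[l l0 xa] := hx e' e'0.
have /pseudo_chainP[l' l'0 aa] := ha e' e'0.
apply/pseudo_chainP; exists (l + l' - 2)%N.+1 => //; apply: he'.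
by rewrite (_ : (l + l' - 2).+2 = l + l')%N; [exact: pchain_cat xa aa | lia].
Qed.

Lemma chain_reach_iter {a x} k :
  chain_recurrent f a -> chain_reach f x a -> chain_reach f (iter k f x) a.
Proof. by move=> ha hx; elim: k => [|k IH] //=; exact: chain_reach_f. Qed.

Lemma chain_recurrent_iter q k :
  chain_recurrent f q -> chain_recurrent f (iter k f q).
Proof.
move=> hq; elim: k => [|k IH] //= e e0.
have /pseudo_chainP[l l0 qq] := chain_reach_f IH IH e e0.
apply/pseudo_chainP; exists (l + 1)%N; first lia.
by apply: (pchain_cat qq); apply: pchain1; rewrite /= mdistxx.
Qed.

Lemma orbit_cluster_chain_recurrent x y :
  (forall r, 0 < r -> forall N, exists m, (N <= m)%N /\ d y (iter m f x) < r) ->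
  chain_recurrent f y.
Proof.
move=> ycl e e0; have [r r0 hr] := continuous_mdist fc y _ e0.
have re0 : 0 < Order.min r e by rewrite lt_min r0 e0.
have [m1 [_]] := ycl _ re0 0%N; rewrite lt_min => /andP[/hr ym1 _].
have [m2 [m12]] := ycl _ re0 m1.+2; rewrite lt_min => /andP[_ ym2].
have y_m1 : pchain f e y (iter m1.+1 f x) 1 by exact: pchain1.
have m1_m2 : pchain f e (iter m1.+1 f x) (iter m2.-1 f x) (m2.-1 - m1.+1).
  have := pchain_orbit f e (iter m1.+1 f x) (m2.-1 - m1.+1) e0.
  by rewrite -iterD subnK //; lia.
have m2_y : pchain f e (iter m2.-1 f x) y 1.
  by apply: pchain1; rewrite -iterS prednK; [rewrite metric_sym | lia].
apply/pseudo_chainP; exists (1 + (m2.-1 - m1.+1) + 1)%N; first lia.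
exact: pchain_cat (pchain_cat y_m1 m1_m2) m2_y.
Qed.

End ChainContinuous.

Arguments chain_reach_iter {R X f} fc {a x} k.
Arguments chain_recurrent_iter {R X f} fc {q} k.
Arguments orbit_cluster_chain_recurrent {R X f} fc x {y}.

Section PositiveExpansivity.
Context {R : realType} {X : metricType R}.
Local Notation d := (@mdist R X).
Variables (f : X -> X) (n : nat) (c : R).
Hypothesis expansive :
  forall x, exists s : seq X, (size s <= n)%N /\ stable_set f c x `<=` [set` s].

Lemma stable_set_collision x (h : nat -> X) :
  (forall i, (i <= n)%N -> stable_set f c x (h i)) ->
  exists i j, [/\ (i < j)%N, (j <= n)%N & h i = h j].
Proof.
by move=> xh; have [s [sn xs]] := expansive x; apply: pigeonhole_seq sn => i /xh /xs.
Qed.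

Lemma near_orbits_stable {u : nat -> X} {y z : X} :
  (forall k, d (iter k f y) (u k) < c / 2) -> (forall k, d (iter k f z) (u k) < c / 2) ->
  stable_set f c y z.
Proof.
move=> yu zu k; have := metric_triangle (iter k f z) (u k) (iter k f y).
by rewrite (metric_sym (u k)); have := yu k; have := zu k; lra.
Qed.

Lemma asymptotic_periodic_collision x q p m0 : (0 < p)%N -> iter p f q = q ->
  (forall k, d (iter (k + m0) f x) (iter k f q) < c / 2) ->
  exists i j, (i < j)%N /\ iter i f x = iter j f x.
Proof.
move=> p0 qp track; have qlp l k : iter (k + l * p) f q = iter k f q.
  by elim: l => [|l IH]; rewrite ?addn0 // mulSn addnCA addnC iterD qp IH.
pose P l := iter (l * p + m0) f x.
have P_near l k : d (iter k f (P l)) (iter k f q) < c / 2.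
  by have := track (k + l * p)%N; rewrite qlp /P -iterD addnA.
have [i [j [ij _ Pij]]] := @stable_set_collision (P 0%N) P
  (fun l _ => near_orbits_stable (P_near 0%N) (P_near l)).
by exists (i * p + m0)%N, (j * p + m0)%N; rewrite ltn_add2r ltn_pmul2r.
Qed.

End PositiveExpansivity.

Arguments stable_set_collision {R X f n c} expansive {x h}.
Arguments near_orbits_stable {R X f c u y z}.
Arguments asymptotic_periodic_collision {R X f n c} expansive {x q p m0}.

Section FiniteChainRecurrentSet.
Context {R : realType} {X : metricType R}.
Local Notation d := (@mdist R X).
Variable f : X -> X.
Hypothesis fc : continuous f.
Variable Fs : seq X.

Lemma orbit_eventually_near x rho : compact [set: X] ->
  (forall q, chain_recurrent f q -> q \in Fs) -> 0 < rho ->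
  exists m0, forall m, (m0 <= m)%N -> exists2 q, q \in Fs & d (iter m f x) q < rho.
Proof.
move=> cX CR_Fs rho0; apply: contrapT => /forallNP not_near.
pose far m := forall q, q \in Fs -> rho <= d (iter m f x) q.
have far_after N : exists m, (N <= m)%N /\ far m.
  have /existsNP[m /not_implyP[Nm not_near_m]] := not_near N.
  by exists m; split => // q qF; rewrite leNgt; apply/negP => xq; apply: not_near_m; exists q.
pose B N := [set iter m f x | m in [set m | (N <= m)%N /\ far m]].
have [||y ycl] := @compact_cluster_base _ _ _ B 0%N cX.
- move=> N N'; exists (maxn N N') => _ [m [+ farm] <-].
  by rewrite geq_max => /andP[Nm N'm]; split; exists m.
- by move=> N; have [m mN] := far_after N; exists (iter m f x), m.
have /CR_Fs yF : chain_recurrent f y.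
  apply: (orbit_cluster_chain_recurrent fc x) => r r0 N.
  by have [_ [m [Nm _] <-] yz] := ycl N r r0; exists m.
have [_ [m [_ farm] <-] ym] := ycl 0%N rho rho0.
by have := farm y yF; rewrite metric_sym leNgt ym.
Qed.

Lemma orbit_locks_on eps : (forall q, q \in Fs -> f q \in Fs) -> 0 < eps ->
  exists2 rho, 0 < rho <= eps & forall x m0 q, q \in Fs ->
    (forall m, (m0 <= m)%N -> exists2 q', q' \in Fs & d (iter m f x) q' < rho) ->
    d (iter m0 f x) q < rho -> forall k, d (iter (k + m0) f x) (iter k f q) < rho.
Proof.
move=> Fs_inv eps0; have Fs_iter k q : q \in Fs -> iter k f q \in Fs.
  by elim: k => [|k IH] //= /IH /Fs_inv.
have [D D0 sepD] := seq_separated Fs.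
have D20 : 0 < D / 2 by rewrite divr_gt0.
have [r r0 hr] : exists2 r, 0 < r &
    forall q, q \in Fs -> forall z, d q z < r -> d (f q) (f z) < D / 2.
  apply: uniform_radius => [q r r' /andP[_ r'r] h z qz|q _]; last exact: continuous_mdist.
  exact: h (lt_le_trans qz r'r).
(* Once the orbit is rho-close to [f^k q], its next point is D/2-close to
   [f^(k+1) q], and D-separation rules out any other point of [Fs]. *)
pose rho := Order.min r (Order.min eps (D / 2)).
have rho0 : 0 < rho by rewrite !lt_min r0 eps0 D20.
have [rho_r rho_eps rho_D] : [/\ rho <= r, rho <= eps & rho <= D / 2].
  by rewrite !ge_min !lexx !orbT.
exists rho; first by rewrite rho0 rho_eps.
move=> x m0 q qF near_x xq; elim=> [|k IH] //.
have [q' q'F xq'] := near_x (k.+1 + m0)%N (leq_addl _ _).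
have := hr _ (Fs_iter k q qF) (iter (k + m0) f x).
rewrite metric_sym => /(_ (lt_le_trans IH rho_r)) fx_fq.
have [<- //|nq] := eqVneq q' (iter k.+1 f q).
have := sepD _ (Fs_iter k.+1 q qF) _ q'F; rewrite eq_sym => /(_ nq).
have := metric_triangle (iter k.+1 f q) (iter (k.+1 + m0) f x) q'.
by rewrite addSn metric_sym; lra.
Qed.

End FiniteChainRecurrentSet.

Arguments orbit_eventually_near {R X f} fc {Fs} x {rho}.
Arguments orbit_locks_on {R X f} fc {Fs eps}.

Lemma chain_recurrent_everywhere {R : realType} {X : metricType R} {f g : X -> X}
    {n : nat} {c : R} {Fs : seq X} :
  compact [set: X] -> continuous f -> cancel f g -> 0 < c ->
  (forall x, exists s : seq X, (size s <= n)%N /\ stable_set f c x `<=` [set` s]) ->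
  (forall q, chain_recurrent f q <-> q \in Fs) ->
  forall x, chain_recurrent f x.
Proof.
move=> cX fc fK c0 expansive CR_Fs x.
have Fs_inv q : q \in Fs -> f q \in Fs.
  by move=> /CR_Fs /(chain_recurrent_iter fc 1) /CR_Fs.
have c20 : 0 < c / 2 by rewrite divr_gt0.
have [rho /andP[rho0 rho_c] lock] := orbit_locks_on fc Fs_inv c20.
have [m0 near_x] := orbit_eventually_near fc x cX (fun q => (CR_Fs q).1) rho0.
have [q qF xq] := near_x m0 (leqnn m0).
have [i [p [p0 qp]]] := finite_invariant_eventually_periodic Fs_inv qF.
have track k : mdist (iter (k + (i + m0)) f x) (iter k f (iter i f q)) < c / 2.
  by rewrite addnA -iterD; exact: lt_le_trans (lock _ _ _ qF near_x xq _) rho_c.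
have [j1 [j2 [j12 xj]]] := asymptotic_periodic_collision expansive p0 qp track.
apply: (periodic_chain_recurrent f x (j2 - j1)); first by rewrite subn_gt0.
exact: iter_collision_periodic fK j12 xj.
Qed.

Section Shadowing.
Context {R : realType} {X : metricType R}.
Local Notation d := (@mdist R X).
Variables (f g : X -> X) (n : nat) (c delta : R).
Hypotheses (fc : continuous f) (fK : cancel f g) (gK : cancel g f) (delta0 : 0 < delta).
Hypothesis expansive :
  forall x, exists s : seq X, (size s <= n)%N /\ stable_set f c x `<=` [set` s].
Hypothesis shadow : forall xs : int -> X, (forall k, d (f (xs k)) (xs (k + 1)) < delta) ->
  exists ys : int -> X, (forall k, ys (k + 1) = f (ys k)) /\ (forall k, d (ys k) (xs k) < c / 2).

Lemma shadow_loop {a : X} {w : nat -> X} {N : nat} :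
  w 0%N = a -> w N = a -> pseudo_orbit f delta w N ->
  exists z, (forall m, d (iter m f z) (iter m f a) < c / 2) /\
            (forall t, (t < N)%N -> d (iter (N - t) g z) (w t) < c / 2).
Proof.
move=> w0 wN w_po.
have PoszS m : Posz m + 1 = m.+1 :> int by lia.
have Negz0S : Negz 0 + 1 = 0 :> int by lia.
have NegzSS m : Negz m.+1 + 1 = Negz m by lia.
(* The loop occupies the times -N..0 (Negz m is the time -(m+1)), preceded by
   the backward orbit of [a] and followed by its forward orbit. *)
pose xs (k : int) := match k with
  | Posz m => iter m f a
  | Negz m => if (m < N)%N then w (N - m.+1)%N else iter (m.+1 - N) g a end.
have xs_po k : d (f (xs k)) (xs (k + 1)) < delta.
  case: k => [m|[|m]]; rewrite ?PoszS ?Negz0S ?NegzSS /=; first by rewrite mdistxx.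
    have [->|N0] := posnP N; first by rewrite subn0 /= gK mdistxx.
    by have := w_po N.-1; rewrite prednK // subn1 wN; apply.
  have [mN|Nm] := ltnP m.+1 N.
    rewrite ifT ?(ltnW mN) // (_ : N - m.+1 = (N - m.+2).+1)%N; last lia.
    by apply: w_po; lia.
  have [mN|Nm'] := ltnP m N.
    have -> : (m.+2 - N = 1)%N by lia.
    have -> : (N - m.+1 = 0)%N by lia.
    by rewrite /= gK w0 mdistxx.
  have -> : (m.+2 - N = (m.+1 - N).+1)%N by lia.
  by rewrite /= gK mdistxx.
have [ys [ys_orbit ys_near]] := shadow _ xs_po.
have ysP m : ys (Posz m) = iter m f (ys 0).
  by elim: m => [|m IH] //=; rewrite -IH -ys_orbit PoszS.
have ysN m : ys (Negz m) = iter m.+1 g (ys 0).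
  elim: m => [|m IH]; first by rewrite /= -[ys (Negz 0)]fK -ys_orbit Negz0S.
  by rewrite [RHS]iterS -IH -[ys (Negz m.+1)]fK -ys_orbit NegzSS.
exists (ys 0); split => [m|t tN]; first by rewrite -ysP; exact: ys_near (Posz m).
have := ys_near (Negz (N - t).-1); rewrite ysN prednK ?subn_gt0 //= ifT; last lia.
by rewrite (_ : N - (N - t).-1.+1 = t)%N //; lia.
Qed.

Lemma loops_common_shadow {a : X} {N : nat} {W : nat -> nat -> X} :
  (forall i, (i <= n)%N -> [/\ W i 0%N = a, W i N = a & pseudo_orbit f delta (W i) N]) ->
  exists i j z, [/\ (i < j)%N, (j <= n)%N & forall t, (t < N)%N ->
    d (iter (N - t) g z) (W i t) < c / 2 /\ d (iter (N - t) g z) (W j t) < c / 2].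
Proof.
move=> W_loop; have /choice[z z_near] : forall i, exists z, (i <= n)%N ->
    (forall m, d (iter m f z) (iter m f a) < c / 2) /\
    (forall t, (t < N)%N -> d (iter (N - t) g z) (W i t) < c / 2).
  move=> i; have [/W_loop[W0 WN W_po]|ni] := leqP i n; last by exists a.
  by have [z hz] := shadow_loop W0 WN W_po; exists z.
have [i [j [ij jn zij]]] := stable_set_collision expansive (x := z 0%N) (h := z)
  (fun i iN => near_orbits_stable (z_near 0%N (leq0n n)).1 (z_near i iN).1).
exists i, j, (z j); split => // t tN; split; last exact: (z_near j jn).2.
by rewrite -zij; apply: (z_near i (ltnW (leq_trans ij jn))).2.
Qed.

Lemma separated_loops_absurd a x y t s : (0 < s)%N ->
  pchain f delta a x t -> pchain f delta x a s ->
  pchain f delta a y t -> pchain f delta y a s -> c < d x y -> False.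
Proof.
move=> s0 ax xa ay ya cxy; set P := (t + s)%N.
have [LX [LX0 LXt LXP LX_po]] := pchain_cat_at ax xa.
have [LY [LY0 LYt LYP LY_po]] := pchain_cat_at ay ya.
(* [W i] runs the loop [LX] i times, then [LY] (n - i) times; for i < j the
   loops [W i] and [W j] pass through y and x at the same time i * P + t. *)
pose W i := splice (repeat_loop a LX P i) (i * P) (repeat_loop a LY P (n - i)).
have W_loop i : (i <= n)%N ->
    [/\ W i 0%N = a, W i (n * P)%N = a & pseudo_orbit f delta (W i) (n * P)].
  move=> iN; rewrite -(subnKC iN) mulnDl.
  have LXY : repeat_loop a LX P i (i * P) = repeat_loop a LY P (n - i) 0.
    by rewrite repeat_loop_end ?repeat_loop0.
  split; [by rewrite /W spliceL ?repeat_loop0 | by rewrite /W spliceR // repeat_loop_end |].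
  by apply: pseudo_orbit_splice => //; exact: pseudo_orbit_repeat.
have [i [j [z [ij jn z_near]]]] := loops_common_shadow W_loop.
have tP : (t < P)%N by rewrite /P; lia.
have t0N : (i * P + t < n * P)%N.
  have : (i.+1 * P <= n * P)%N by rewrite leq_mul2r (leq_trans ij jn) orbT.
  by rewrite mulSn; lia.
have Wi : W i (i * P + t)%N = y.
  rewrite /W spliceR ?repeat_loop_end ?repeat_loop0 // repeat_loop_head ?(ltnW tP) //.
  by rewrite subn_gt0 (leq_trans ij jn).
have Wj : W j (i * P + t)%N = x.
  have : (i.+1 * P <= j * P)%N by rewrite leq_mul2r ij orbT.
  by rewrite mulSn => ijP; rewrite /W spliceL ?repeat_loopE //; lia.
have [] := z_near _ t0N; rewrite Wi Wj => zy zx.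
have := metric_triangle x (iter (n * P - (i * P + t)) g z) y.
by rewrite (metric_sym x (iter _ g z)); lra.
Qed.

Lemma chain_related_finite a :
  compact [set: X] -> chain_recurrent f a -> finite_set (chain_related f a).
Proof.
move=> cX ha; apply: contrapT => Cl_inf.
have delta40 : 0 < delta / 4 by rewrite divr_gt0.
have [y [s [sn us near_s]]] := infinite_clustered cX Cl_inf n.+1 _ delta40.
case: s sn us near_s => // p0 l ln ul near_l.
have [[ap0 p0a] yp0] := near_l p0 (mem_head _ _).
have [S S0 aS] : exists2 S, (0 < S)%N & pchain f (delta / 2) a p0 S.
  by apply/pseudo_chainP/ap0; rewrite divr_gt0.
have a_orbit q k : q \in p0 :: l -> pchain f delta a (iter k f q) (S + k).
  move=> /near_l[_ yq]; have p0q : d p0 q < delta / 2.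
    by have := metric_triangle p0 y q; rewrite (metric_sym p0 y); lra.
  apply: (pchain_cat _ (pchain_orbit _ _ _ _ delta0)).
  by apply: pchain_le (pchain_move_end S0 aS p0q); lra.
have [stable|] := pselect (forall q, q \in p0 :: l -> stable_set f c p0 q).
  have [|i [j [ij jn]]] := stable_set_collision expansive (x := p0) (h := nth p0 (p0 :: l)).
    by move=> i iN; apply/stable/mem_nth; rewrite ln.
  move/eqP; rewrite nth_uniq ?ln ?ltnS ?(ltn_eqF ij) ?jn //; exact: ltnW (leq_trans ij jn).
move=> /existsNP[q /not_implyP[ql /existsNP[k /negP]]]; rewrite -ltNge => cxy.
have [[_ qa] _] := near_l q ql.
have /pseudo_chainP[T0 T00 xa] := chain_reach_iter fc k ha qa delta delta0.
have /pseudo_chainP[T1 T10 ya] := chain_reach_iter fc k ha p0a delta delta0.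
have ax := a_orbit q k ql; have ay := a_orbit p0 k (mem_head _ _).
apply: (@separated_loops_absurd a _ _ (S + k) (T0 + (S + k) + T1) _ ax _ ay _ cxy).
- lia.
- exact: pchain_cat (pchain_cat xa ay) ya.
- rewrite (_ : T0 + (S + k) + T1 = T1 + (S + k) + T0)%N; last lia.
  exact: pchain_cat (pchain_cat ya ax) xa.
Qed.

End Shadowing.

Arguments chain_related_finite {R X f g n c delta} fc fK gK delta0 expansive shadow {a}.

Theorem theorem2p5 (R : realType) (X : metricType R) (f g : X -> X) (n : nat) :
  compact [set: X] ->
  continuous f -> continuous g -> cancel f g -> cancel g f ->
  pos_n_expansive f n ->
  shadowing f ->
  finite_set (chain_classes f) ->
  finite_set [set: X].
Proof.
move=> cX fc _ fK gK [c c0 expansive] shadowing_f classes_fin.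
have c20 : 0 < c / 2 by rewrite divr_gt0.
have [delta delta0 shadow] := shadowing_f _ c20.
have CR_fin : finite_set (chain_recurrent f).
  apply: (@sub_finite_set _ _ (\bigcup_(C in chain_classes f) C)).
    by move=> x xCR; exists (chain_class f x); [exists x | exact: chain_class_refl].
  apply: bigcup_finite => // _ [a aCR ->].
  apply: sub_finite_set (chain_class_related f a) _.
  exact: (chain_related_finite fc fK gK delta0 expansive shadow cX aCR).
have [Fs CR_Fs] := (finite_seqP _).1 CR_fin.
apply: sub_finite_set CR_fin => x _.
by apply: (chain_recurrent_everywhere (Fs := Fs) cX fc fK c0 expansive) => q; rewrite CR_Fs.
Qed.
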